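(* Let $p$ be a prime and $\chi$ a primitive Dirichlet character modulo $p^m$ ($m\ge1$). Then for all integers $n\ge m$ and $k\ge0$, $$S_k(p^n,\chi)\equiv0\pmod{p^{n-1}}.$$ Furthermore, when $p=2$: if $m\ge3$, or $m=2$ and $k$ is even, or $m=1$ and $k$ is odd, then for all $n\ge\max\{m,2\}$, $$S_k(2^n,\chi)\equiv0\pmod{2^n}.$$
   Context: $S_k(N,\chi)=\sum_{j=1}^N\chi(j)j^k$. Values lie in the ring of algebraic integers of the cyclotomic field generated by the values of $\chi$, where congruences are taken. *)

From HB Require Import structures.
From mathcomp Require Import all_boot all_order all_algebra all_field.
Set Implicit Arguments. Unset Strict Implicit. Unset Printing Implicit Defensive.
Import Order.TTheory GRing.Theory Num.Theory.
Local Open Scope ring_scope.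

Definition dirichlet_char (N : nat) (chi : nat -> algC) : Prop :=
  [/\ (0 < N)%N,
      chi 1%N = 1,
      (forall a b : nat, chi (a * b)%N = chi a * chi b),
      (forall a : nat, chi (a + N)%N = chi a) &
      (forall a : nat, (chi a == 0) = ~~ coprime a N)].

(* chi mod N is primitive: there is no proper divisor d of N that is an
   induced modulus, i.e. for every d | N with d < N there is some a coprime
   to N with a = 1 (mod d) and chi a <> 1. *)
Definition primitive_char (N : nat) (chi : nat -> algC) : Prop :=
  forall d : nat, (d %| N)%N -> (d < N)%N ->
    exists a : nat, [/\ coprime a N, (a = 1 %[mod d])%N & chi a != 1].

Definition Schar (k N : nat) (chi : nat -> algC) : algC :=
  \sum_(1 <= j < N.+1) chi j * (j%:R) ^+ k.

(* x = 0 mod q in the ring of integers O_K of the number field K = Q(values of chi),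
   for x in O_K: x/q lies in K, so this is equivalent to x/q being an algebraic integer. *)
Definition cong0_mod (x : algC) (q : nat) : Prop := x / q%:R \in Aint.

(* Write S_k(L) for the sum of chi(j) j^k over 0 <= j < L.  Reducing j^k modulo
   p^(n-1) turns S_k(p^n) into the sum of chi(j) (j mod p^(n-1))^k.  For n = m
   this sum vanishes: multiplying j by some a = 1 (mod p^(m-1)) with chi(a) <> 1,
   which exists by primitivity, permutes its terms and scales it by chi(a).  For
   n > m the periodicity of chi makes it p S_k(p^(n-1)), and induction applies.

   For p = 2 and m >= 2, primitivity forces chi(1 + 2^(m-1)) = -1, hence
   chi(2^(m-1) + j) = -chi(j).  Pairing j with L + j and expanding (L + j)^k
   modulo L^2 gives S_k(2L) = -k L S_(k-1)(L) (mod L^2) for L = 2^(m-1), which is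
   divisible by 2L when k is even or, for m >= 3, because S_(k-1)(2^(m-1)) is even
   (reflect j to 2^(m-1) - j).  Above the base the same expansion gives
   S_k(2L) = 2 S_k(L) + k L S_(k-1)(L) (mod L^2) for L = 2^n, and the first part
   of the theorem bounds the last term.  There is no primitive character mod 2. *)

From mathcomp Require Import all_boot all_order all_algebra all_field.
From mathcomp Require Import cyclic zify ring.
Import Order.TTheory GRing.Theory Num.Theory.
Set Implicit Arguments. Unset Strict Implicit.
Local Open Scope ring_scope.

Section Cong0Mod.
Implicit Types (q : nat) (x y : algC).

Lemma cong0_mod0 q : cong0_mod 0 q.
Proof. by rewrite /cong0_mod mul0r rpred0. Qed.

Lemma cong0_modD q x y : cong0_mod x q -> cong0_mod y q -> cong0_mod (x + y) q.
Proof. by rewrite /cong0_mod mulrDl; apply: rpredD. Qed.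

Lemma cong0_modBr q x y : cong0_mod y q -> cong0_mod (x - y) q -> cong0_mod x q.
Proof. by move=> yq /cong0_modD/(_ yq); rewrite subrK. Qed.

Lemma cong0_modN q x : cong0_mod x q -> cong0_mod (- x) q.
Proof. by rewrite /cong0_mod mulNr rpredN. Qed.

Lemma cong0_modMl q a x : a \in Aint -> cong0_mod x q -> cong0_mod (a * x) q.
Proof. by rewrite /cong0_mod -mulrA; apply: rpredM. Qed.

Lemma cong0_mod_sum q (I : Type) (r : seq I) (P : pred I) (F : I -> algC) :
  (forall i, P i -> cong0_mod (F i) q) -> cong0_mod (\sum_(i <- r | P i) F i) q.
Proof. by move=> FP; rewrite /cong0_mod mulr_suml; apply: rpred_sum. Qed.

Lemma cong0_mod_natM q a : a \in Aint -> cong0_mod (q%:R * a) q.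
Proof.
have [->|q_gt0] := posnP q; first by rewrite /cong0_mod invr0 mulr0 rpred0.
by rewrite /cong0_mod mulrC mulKf // pnatr_eq0 -lt0n.
Qed.

Lemma cong0_mod_natMl d q x : cong0_mod x q -> cong0_mod (d%:R * x) (d * q).
Proof.
have [->|d_gt0] := posnP d; first by rewrite mul0r /cong0_mod mul0r rpred0.
by rewrite /cong0_mod natrM invfM mulrACA divff ?mul1r // pnatr_eq0 -lt0n.
Qed.

Lemma cong0_mod_dvd d q x : (0 < q)%N -> (d %| q)%N -> cong0_mod x q -> cong0_mod x d.
Proof.
move=> q_gt0 /dvdnP[e def_q]; move: q_gt0.
rewrite /cong0_mod def_q muln_gt0 => /andP[e_gt0 d_gt0].
have [e_neq0 d_neq0] : e%:R != 0 :> algC /\ d%:R != 0 :> algC by rewrite !pnatr_eq0 -!lt0n.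
have -> : x / d%:R = e%:R * (x / (e * d)%:R) by rewrite natrM invfM mulrCA mulVKf.
by apply: rpredM; rewrite ?rpred_nat.
Qed.

Lemma cong0_mod_natB q a b : (a = b %[mod q])%N -> cong0_mod (a%:R - b%:R) q.
Proof.
move=> eq_ab; have -> : a%:R - b%:R = q%:R * ((a %/ q)%:R - (b %/ q)%:R) :> algC.
  by rewrite {1}(divn_eq a q) {1}(divn_eq b q) eq_ab !natrD !natrM; ring.
by apply: cong0_mod_natM; rewrite rpredB ?rpred_nat.
Qed.

End Cong0Mod.

Lemma eqn_modMl_coprime a x y N :
  coprime a N -> (a * x == a * y %[mod N])%N = (x == y %[mod N])%N.
Proof.
move=> aN; wlog le_xy : x y / (x <= y)%N.
  by move=> IH; case: (leqP x y) => [|/ltnW] ?; last rewrite eq_sym [RHS]eq_sym; apply: IH.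
rewrite eq_sym [RHS]eq_sym !eqn_mod_dvd ?leq_mul2l ?le_xy ?orbT //.
by rewrite -mulnBr Gauss_dvdr // coprime_sym.
Qed.

Lemma sum_ord_modn (V : nmodType) q M (F : nat -> V) :
  \sum_(j < q * M) F (j %% M)%N = (\sum_(j < M) F j) *+ q.
Proof.
elim: q => [|q IHq]; first by rewrite mul0n big_ord0.
rewrite mulSn big_split_ord /= mulrS -IHq; congr (_ + _).
  by apply: eq_bigr => j _; rewrite modn_small.
by apply: eq_bigr => j _; rewrite modnDl.
Qed.

Lemma sum_ord_shift (V : zmodType) L (F : nat -> V) :
  F 0%N = F L -> \sum_(j < L) F j.+1 = \sum_(j < L) F j.
Proof.
move=> F0L; apply: (addrI (F 0%N)); transitivity (\sum_(j < L.+1) F j).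
  by rewrite big_ord_recl; congr (_ + _); apply: eq_bigr => j _; rewrite lift0.
by rewrite big_ord_recr /= F0L addrC.
Qed.

Definition Schar0 (k L : nat) (chi : nat -> algC) : algC :=
  \sum_(j < L) chi j * j%:R ^+ k.

Lemma Schar0_addn k L chi :
  Schar0 k (L + L) chi = Schar0 k L chi + \sum_(j < L) chi (L + j)%N * (L + j)%:R ^+ k.
Proof. by rewrite /Schar0 big_split_ord. Qed.

Lemma expnD_mod_sq a M k : ((a + M) ^ k = a ^ k + k * M * a ^ k.-1 %[mod M * M])%N.
Proof.
have [c ->] : exists c, ((a + M) ^ k = a ^ k + k * M * a ^ k.-1 + M * M * c)%N.
  elim: k => [|k [c IHk]]; first by exists 0%N; rewrite !muln0 !mul0n !addn0.
  exists (c * a + k * a ^ k.-1 + M * c)%N; rewrite expnS IHk.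
  case: k {IHk} => [|k] /=; first by rewrite !expn0 expn1; nia.
  by rewrite !expnS; move: (a ^ k)%N => x; nia.
by rewrite -modnDmr modnMr addn0.
Qed.

Section DirichletCharacter.
Variables (N : nat) (chi : nat -> algC).
Hypothesis chiD : dirichlet_char N chi.

Lemma dchar_gt0 : (0 < N)%N. Proof. by case: chiD. Qed.
Lemma dchar1 : chi 1 = 1. Proof. by case: chiD. Qed.
Lemma dcharM a b : chi (a * b) = chi a * chi b. Proof. by case: chiD. Qed.

Lemma dchar_eq0 a : ~~ coprime a N -> chi a = 0.
Proof. by case: chiD => _ _ _ _ chi0 a_N; apply/eqP; rewrite chi0. Qed.

Lemma dchar_addMn a t : chi (a + t * N) = chi a.
Proof.
case: chiD => _ _ _ chiN _; elim: t => [|t IHt]; first by rewrite addn0.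
by rewrite mulSn addnCA addnC chiN IHt.
Qed.

Lemma dchar_eqmod a b : (a = b %[mod N])%N -> chi a = chi b.
Proof.
move=> eq_ab; rewrite (divn_eq a N) (divn_eq b N) eq_ab.
by rewrite !(addnC _ (_ %% N)%N) !dchar_addMn.
Qed.

Lemma dchar_expn a t : chi (a ^ t) = chi a ^+ t.
Proof. by elim: t => [|t IHt]; rewrite ?dchar1 // expnS dcharM IHt exprS. Qed.

Lemma dchar_Aint a : chi a \in Aint.
Proof.
have [a_N|/dchar_eq0->] := boolP (coprime a N); last exact: rpred0.
apply: (@Aint_unity_root (totient N)); first by rewrite totient_gt0 dchar_gt0.
by rewrite unity_rootE -dchar_expn (dchar_eqmod (Euler_exp_totient a_N)) dchar1.
Qed.

Lemma dchar_subn i : (i <= N)%N -> chi (N - i) = chi N.-1 * chi i.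
Proof.
move=> le_iN; rewrite -dcharM; apply: dchar_eqmod; apply/eqP.
by rewrite -(eqn_modDr i) subnK // -mulSnr prednK ?dchar_gt0 // modnn modnMr.
Qed.

Lemma dchar_predN : chi N.-1 = 1 \/ chi N.-1 = -1.
Proof.
have: chi N.-1 ^+ 2 == 1.
  have N_pred : (N - N.-1 = 1)%N by have := dchar_gt0; lia.
  by rewrite expr2 -dchar_subn ?leq_pred // N_pred dchar1.
by rewrite sqrf_eq1 => /orP[]/eqP; [left|right].
Qed.

Lemma Schar0_Aint k L : Schar0 k L chi \in Aint.
Proof. by apply: rpred_sum => j _; rewrite rpredM ?rpredX ?rpred_nat ?dchar_Aint. Qed.

Lemma Schar_Schar0 k L : (1 < N)%N -> (N %| L)%N -> Schar k L chi = Schar0 k L chi.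
Proof.
move=> N_gt1 NL.
have chi0 : chi 0 = 0 by rewrite dchar_eq0 // /coprime gcd0n neq_ltn N_gt1 orbT.
have [->|L_gt0] := posnP L; first by rewrite /Schar /Schar0 big_ord0 big_geq.
rewrite /Schar /Schar0 big_nat_recr //=.
rewrite -(big_mkord xpredT (fun j => chi j * j%:R ^+ k)) (big_ltn L_gt0) /=.
rewrite chi0 (@dchar_eqmod L 0) ?chi0 ?mul0r ?addr0 ?add0r //.
by rewrite mod0n; apply/eqP.
Qed.

Lemma Schar0_modn k L M :
  cong0_mod (Schar0 k L chi - \sum_(j < L) chi j * (j %% M)%N%:R ^+ k) M.
Proof.
rewrite /Schar0 -sumrB; apply: cong0_mod_sum => j _.
rewrite -mulrBr; apply: cong0_modMl (dchar_Aint _) _.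
by rewrite -!natrX; apply: cong0_mod_natB; rewrite modnXm.
Qed.

Lemma Schar0_period k q M : (N %| M)%N ->
  \sum_(j < q * M) chi j * (j %% M)%N%:R ^+ k = q%:R * Schar0 k M chi.
Proof.
move=> NM; rewrite mulr_natl -(sum_ord_modn q M (fun j => chi j * j%:R ^+ k)).
by apply: eq_bigr => j _; rewrite (@dchar_eqmod j (j %% M)) // modn_dvdm.
Qed.

Lemma Schar0_shift k L :
  cong0_mod (\sum_(j < L) chi j * (L + j)%:R ^+ k
             - (Schar0 k L chi + (k * L)%:R * Schar0 k.-1 L chi)) (L * L).
Proof.
rewrite /Schar0 mulr_sumr -big_split -sumrB /=; apply: cong0_mod_sum => j _.
have -> : chi j * (L + j)%:R ^+ k - (chi j * j%:R ^+ k + (k * L)%:R * (chi j * j%:R ^+ k.-1))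
    = chi j * ((j + L) ^ k)%:R - chi j * (j ^ k + k * L * j ^ k.-1)%:R.
  by rewrite addnC !(natrX, natrD, natrM); ring.
rewrite -mulrBr; apply: cong0_modMl; first exact: dchar_Aint.
exact/cong0_mod_natB/expnD_mod_sq.
Qed.

Lemma primitive_sum_modn_eq0 (F : nat -> algC) d :
  primitive_char N chi -> (d %| N)%N -> (d < N)%N ->
  \sum_(j < N) chi j * F (j %% d)%N = 0.
Proof.
move=> chiP dN lt_dN; have [a [aN a1 chia]] := chiP d dN lt_dN.
pose f (j : 'I_N) : 'I_N := Ordinal (ltn_pmod (a * j) dchar_gt0).
have f_inj : injective f.
  move=> x y /(congr1 val)/eqP /=; rewrite eqn_modMl_coprime // !modn_small //.
  by move/eqP/val_inj.
set V := \sum_(j < N) _; have /eqP : V = chi a * V.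
  rewrite {1}/V (reindex_inj f_inj) mulr_sumr; apply: eq_bigr => j _ /=.
  rewrite (@dchar_eqmod _ (a * j)) ?modn_mod // dcharM -mulrA modn_dvdm //.
  by rewrite -modnMml a1 modnMml mul1n.
rewrite -subr_eq0 -[X in X - _]mul1r -mulrBl mulf_eq0 subr_eq0 eq_sym.
by rewrite (negbTE chia) => /eqP.
Qed.

End DirichletCharacter.

Lemma Schar0_prime_power p m chi k n :
  prime p -> (0 < m)%N -> dirichlet_char (p ^ m) chi -> primitive_char (p ^ m) chi ->
  (m <= n)%N -> cong0_mod (Schar0 k (p ^ n) chi) (p ^ n.-1).
Proof.
move=> p_pr m_gt0 chiD chiP; have p_gt1 := prime_gt1 p_pr.
elim: n => [|n IHn]; first by rewrite leqNgt m_gt0.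
rewrite leq_eqVlt ltnS => /orP[/eqP def_m | le_mn] /=.
  have := Schar0_modn chiD k (p ^ n.+1) (p ^ n); rewrite -def_m.
  rewrite (primitive_sum_modn_eq0 chiD (fun r => r%:R ^+ k) chiP) ?subr0 //.
    by rewrite dvdn_exp2l // def_m.
  by rewrite def_m ltn_exp2l.
apply: cong0_modBr (Schar0_modn chiD k (p ^ n.+1) (p ^ n)).
rewrite expnS (Schar0_period chiD) ?dvdn_exp2l //.
have := cong0_mod_natMl p (IHn le_mn).
by rewrite -expnS prednK // (leq_trans m_gt0 le_mn).
Qed.

Section DyadicModulus.
Variables (m : nat) (chi : nat -> algC).
Hypotheses (m_ge2 : (2 <= m)%N) (chiD : dirichlet_char (2 ^ m) chi).
Hypothesis chiP : primitive_char (2 ^ m) chi.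

Let expm_double : (2 ^ m = 2 * 2 ^ m.-1)%N.
Proof. by rewrite -expnS prednK // ltnW. Qed.

Let expm1_double : (2 ^ m.-1 = 2 * 2 ^ m.-2)%N.
Proof. by rewrite -expnS; congr expn; lia. Qed.

Lemma dchar_even j : ~~ odd j -> chi j = 0.
Proof.
by move=> j_even; rewrite (dchar_eq0 chiD) // coprime_pexpr ?coprimen2 // ltnW.
Qed.

Lemma dchar_half_addn1 : chi (1 + 2 ^ m.-1) = -1.
Proof.
set d := (2 ^ m.-1)%N.
have: chi (1 + d) ^+ 2 == 1.
  rewrite expr2 -(dcharM chiD) -(dchar1 chiD).
  have -> : ((1 + d) * (1 + d) = 1 + (1 + 2 ^ m.-2) * 2 ^ m)%N.
    by rewrite expm_double /d expm1_double; move: (2 ^ m.-2)%N => e; nia.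
  by rewrite (dchar_addMn chiD).
rewrite sqrf_eq1 => /orP[/eqP chi1d|/eqP//]; exfalso.
have dN : (d %| 2 ^ m)%N by rewrite expm_double dvdn_mull.
have [|a [aN a1 chia]] := chiP dN; first by rewrite expm_double ltn_Pmull ?expn_gt0.
have d_gt1 : (1 < d)%N.
  by rewrite /d expm1_double -{1}[2%N]muln1 leq_pmul2l // expn_gt0.
have r_d : (a %% 2 ^ m %% d = 1)%N by rewrite (modn_dvdm _ dN) a1 (modn_small d_gt1).
have r_lt : (a %% 2 ^ m %/ d < 2)%N.
  by rewrite (ltn_divLR _ _ (ltnW d_gt1)) -[(2 * d)%N]expm_double ltn_mod expn_gt0.
move: chia; rewrite -(@dchar_eqmod _ _ chiD (a %% 2 ^ m)) ?modn_mod //.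
rewrite (divn_eq (a %% 2 ^ m) d) r_d.
by case: (_ %/ _)%N r_lt => [|[|]] // _; rewrite ?mul1n addnC ?chi1d ?(dchar1 chiD) eqxx.
Qed.

Lemma dchar_half_addn j : chi (2 ^ m.-1 + j) = - chi j.
Proof.
have [j_odd|j_even] := boolP (odd j); last first.
  by rewrite !dchar_even ?oppr0 // expm1_double oddD oddM /=.
rewrite -[RHS]mulrN1 -dchar_half_addn1 -(dcharM chiD) -(dchar_addMn chiD _ j./2).
congr chi; rewrite expm_double; have := odd_double_half j; rewrite j_odd -muln2.
by move: j./2 (2 ^ m.-1)%N => t d /= def_j; subst j; nia.
Qed.

Lemma dchar_half_subn i :
  (i <= 2 ^ m.-1)%N -> chi (2 ^ m.-1 - i) = - chi (2 ^ m).-1 * chi i.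
Proof.
move=> le_id; rewrite mulNr -(dchar_subn chiD); last first.
  by rewrite expm_double mul2n -addnn (leq_trans le_id) ?leq_addl.
by rewrite -[LHS]opprK -dchar_half_addn addnBA // addnn -mul2n -expm_double.
Qed.

Lemma Schar0_mod2 e L : cong0_mod (Schar0 e L chi - \sum_(j < L) chi j) 2.
Proof.
rewrite /Schar0 -sumrB; apply: cong0_mod_sum => j _.
have [j_odd|/dchar_even->] := boolP (odd j); last by rewrite mul0r subrr; apply: cong0_mod0.
rewrite -{2}[chi j]mulr1 -mulrBr; apply: cong0_modMl; first exact: (dchar_Aint chiD).
rewrite -natrX; apply: (@cong0_mod_natB 2 (j ^ e) 1).
by rewrite -modnXm (modn2 j) j_odd exp1n.
Qed.

Lemma sum_half_mod2 : (3 <= m)%N -> cong0_mod (\sum_(j < 2 ^ m.-1) chi j) 2.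
Proof.
move=> m_ge3; set L := (2 ^ m.-2)%N.
have chi0 : chi 0 = 0 by rewrite dchar_even.
have chiL : chi L = 0 by rewrite dchar_even // /L oddX orbF -lt0n -subn2 subn_gt0.
have -> : \sum_(j < 2 ^ m.-1) chi j = \sum_(j < L) chi j + \sum_(j < L) chi (L + j)%N.
  by rewrite expm1_double -/L mul2n -addnn big_split_ord.
have -> : \sum_(j < L) chi (L + j)%N = - chi (2 ^ m).-1 * \sum_(j < L) chi j.
  rewrite (reindex_inj rev_ord_inj) /= -(@sum_ord_shift _ L chi) ?chi0 ?chiL // mulr_sumr.
  apply: eq_bigr => j _; have lt_jL := ltn_ord j.
  rewrite -dchar_half_subn ?expm1_double -/L ?mul2n -?addnn ?addnBA //.
  by rewrite (leq_trans lt_jL) ?leq_addl.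
have [->|->] := dchar_predN chiD; first by rewrite mulN1r subrr; apply: cong0_mod0.
rewrite opprK mul1r -mulr2n -mulr_natl; apply: cong0_mod_natM.
by apply: rpred_sum => j _; exact: (dchar_Aint chiD).
Qed.

Lemma Schar0_dyadic_base k :
  (3 <= m)%N \/ ~~ odd k -> cong0_mod (Schar0 k (2 ^ m) chi) (2 ^ m).
Proof.
move=> m3_or_k_even; set d := (2 ^ m.-1)%N.
have d_even : (2 %| d)%N by rewrite /d expm1_double dvdn_mulr.
rewrite {1}expm_double mul2n -addnn Schar0_addn.
under eq_bigr do rewrite dchar_half_addn mulNr.
rewrite sumrN; set S := Schar0 k d chi; set S' := Schar0 k.-1 d chi.
set T := \sum_(j < d) _.
have -> : S - T = - (T - (S + (k * d)%:R * S')) - (k * d)%:R * S' by ring.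
apply: cong0_modD; apply: cong0_modN.
  apply: (cong0_mod_dvd _ _ (Schar0_shift chiD k d)); first by rewrite muln_gt0 expn_gt0.
  by rewrite expm_double -/d; apply: dvdn_mul d_even (dvdnn d).
case: m3_or_k_even => [m_ge3|k_even].
  rewrite natrM -mulrA; apply: cong0_modMl; first exact: rpred_nat.
  rewrite expm_double mulnC; apply: cong0_mod_natMl.
  exact: cong0_modBr (sum_half_mod2 m_ge3) (Schar0_mod2 _ _).
have def_k : k = (k./2 * 2)%N by rewrite -{1}(odd_double_half k) (negbTE k_even) muln2.
have -> : (k * d)%:R * S' = (2 * d)%:R * (k./2%:R * S') by rewrite {1}def_k !natrM; ring.
rewrite expm_double; apply: cong0_mod_natM.
by rewrite rpredM ?rpred_nat ?(Schar0_Aint chiD).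
Qed.

Lemma Schar0_dyadic k n : (3 <= m)%N \/ ~~ odd k -> (m <= n)%N ->
  cong0_mod (Schar0 k (2 ^ n) chi) (2 ^ n).
Proof.
move=> m3_or_k_even; elim: n => [|n IHn]; first by move/(leq_trans m_ge2).
rewrite leq_eqVlt ltnS => /orP[/eqP <- | le_mn]; first exact: Schar0_dyadic_base.
have n_ge2 : (2 <= n)%N := leq_trans m_ge2 le_mn.
set L := (2 ^ n)%N; have NL : (2 ^ m %| L)%N by rewrite dvdn_exp2l.
have chiL j : chi (L + j)%N = chi j.
  by apply: (dchar_eqmod chiD); rewrite -modnDml (eqP NL).
rewrite {1}expnS mul2n -addnn Schar0_addn.
under eq_bigr do rewrite chiL.
set S := Schar0 k L chi; set S' := Schar0 k.-1 L chi; set T := \sum_(j < L) _.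
have -> : S + T = (T - (S + (k * L)%:R * S')) + 2%:R * S + k%:R * (L%:R * S').
  by rewrite natrM; ring.
have dvdN e : (n.+1 <= e)%N -> (2 ^ n.+1 %| 2 ^ e)%N by move=> le_e; rewrite dvdn_exp2l.
apply: cong0_modD; first apply: cong0_modD.
- apply: (cong0_mod_dvd _ _ (Schar0_shift chiD k L)); first by rewrite muln_gt0 expn_gt0.
  by rewrite /L -expnD dvdN // -addn1 leq_add2l ltnW.
- by rewrite expnS; apply: cong0_mod_natMl; apply: IHn.
- apply: cong0_modMl; first exact: rpred_nat.
  have S'_mod := Schar0_prime_power (p := 2) k.-1 isT (ltnW m_ge2) chiD chiP le_mn.
  apply: (cong0_mod_dvd _ _ (cong0_mod_natMl L S'_mod)).
  + by rewrite muln_gt0 !expn_gt0.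
  + by rewrite /L -expnD dvdN //; clear -n_ge2; lia.
Qed.

End DyadicModulus.

Lemma dchar_primitive_mod2F chi : dirichlet_char 2 chi -> primitive_char 2 chi -> False.
Proof.
move=> chiD chiP; have [a [aN _ chia]] := chiP 1%N (dvd1n 2) isT.
move: chia; rewrite (@dchar_eqmod _ _ chiD a 1) ?(dchar1 chiD) ?eqxx //.
by rewrite modn2 -coprimen2 aN.
Qed.

Theorem lemma2p4 (p m : nat) (chi : nat -> algC) :
  prime p -> (1 <= m)%N ->
  dirichlet_char (p ^ m) chi -> primitive_char (p ^ m) chi ->
  (forall n k : nat, (m <= n)%N -> cong0_mod (Schar k (p ^ n) chi) (p ^ n.-1))
  /\
  (p = 2%N -> forall n k : nat,
     ((3 <= m)%N \/ (m = 2%N /\ ~~ odd k) \/ (m = 1%N /\ odd k)) ->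
     (maxn m 2 <= n)%N ->
     cong0_mod (Schar k (2 ^ n) chi) (2 ^ n)).
Proof.
move=> p_pr m_gt0 chiD chiP.
have N_gt1 : (1 < p ^ m)%N by rewrite -{1}(expn0 p) ltn_exp2l ?prime_gt1.
split=> [n k le_mn | p2 n k hmk]; last subst p.
  rewrite (Schar_Schar0 chiD _ N_gt1) ?dvdn_exp2l ?(prime_gt1 p_pr) //.
  exact: (Schar0_prime_power k p_pr m_gt0 chiD chiP le_mn).
rewrite geq_max => /andP[le_mn _].
rewrite (Schar_Schar0 chiD _ N_gt1) ?dvdn_exp2l //.
case: hmk => [m_ge3 | [[def_m k_even] | [def_m _]]].
- exact: (Schar0_dyadic (ltnW m_ge3) chiD chiP (or_introl m_ge3) le_mn).
- by apply: (Schar0_dyadic _ chiD chiP (or_intror k_even) le_mn); rewrite def_m.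
- by move: chiD chiP; rewrite def_m expn1 => chiD2 /(dchar_primitive_mod2F chiD2).
Qed.
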